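(* Let $\Theta$ be a convex overmarked box and $(\varepsilon,\delta)\in\mathbb{R}^2$. Then the convex interior of $\sigma_{(\varepsilon,\delta)}(\Theta)$ is contained in the convex interior of $\Theta$ if and only if $(\varepsilon,\delta)\in\mathcal{R}$.
   Context: Let $V$ be a 3-dimensional real vector space. An overmarked box is $\Theta=((p,q,r,s;t,b),(P,Q,R,S;T,B))$ with $p,\dots,b\in\mathbf{P}(V)$ and lines $P,\dots,B$ of $\mathbf{P}(V)$ such that $P=ts$, $Q=tr$, $R=bq$, $S=bp$, $T=pq$, $B=rs$ (here $xy$ is the line through $x,y$) and $T\cap B\notin\{p,q,r,s,t,b\}$. A $\Theta$-basis is a basis of $V$, unique up to scaling, in which $p=[-1:1:0]$, $q=[1:1:0]$, $r=[1:0:1]$, $s=[-1:0:1]$; then $t=[\zeta_t:1:0]$ and $b=[\zeta_b:0:1]$; $\Theta$ is convex iff $\zeta_t,\zeta_b\in\,]-1,1[$. The convex interior of a convex $\Theta$ is the interior of the convex quadrilateral with vertices $p,q,r,s$ (in this cyclic order) whose sides $[pq]\ni t$ and $[rs]\ni b$; in $\Theta$-basis coordinates it is $\{[x:y:z]: y+z\ne0,\ |x|<|y+z|,\ |y-z|<|y+z|\}$. For $(\varepsilon,\delta)\in\mathbb{R}^2$ let $$\Sigma_{(\varepsilon,\delta)}=\begin{pmatrix}1&0&0\\0&e^{-\delta}\cosh\varepsilon&-\sinh\varepsilon\\0&-\sinh\varepsilon&e^{\delta}\cosh\varepsilon\end{pmatrix},$$ and $\sigma_{(\varepsilon,\delta)}(\Theta)$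 the image of $\Theta$ under the projective transformation with matrix $\Sigma_{(\varepsilon,\delta)}$ in a $\Theta$-basis (its convex interior is the image of that of $\Theta$). Let $f(\varepsilon,\delta)=e^{-\delta}\cosh\varepsilon-\sinh\varepsilon-1$ and $\mathcal{R}=\{(\varepsilon,\delta)\in\mathbb{R}^2:f(\varepsilon,\delta)\ge0,\ f(\varepsilon,-\delta)\ge0\}$. *)

From Stdlib Require Import Reals.
Open Scope R_scope.

(* Homogeneous coordinates [x:y:z] of a point of P(V), in a Theta-basis. *)
Definition vec3 := (R * R * R)%type.

(* An overmarked box, up to the choice of a Theta-basis, is determined by the
   coordinates zeta_t, zeta_b with t = [zeta_t:1:0], b = [zeta_b:0:1]
   (p=[-1:1:0], q=[1:1:0], r=[1:0:1], s=[-1:0:1]). *)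
Record omb := OMB { zeta_t : R; zeta_b : R }.

Definition omb_convex (Th : omb) : Prop :=
  -1 < zeta_t Th < 1 /\ -1 < zeta_b Th < 1.

(* Membership of [x:y:z] (Theta-basis coordinates) in the convex interior of
   a convex overmarked box Theta (this set is invariant under scaling). *)
Definition convex_interior (Th : omb) (v : vec3) : Prop :=
  let '(x, y, z) := v in
  y + z <> 0 /\ Rabs x < Rabs (y + z) /\ Rabs (y - z) < Rabs (y + z).

Definition Sigma (eps del : R) (v : vec3) : vec3 :=
  let '(x, y, z) := v in
  (x,
   exp (- del) * cosh eps * y - sinh eps * z,
   - sinh eps * y + exp del * cosh eps * z).

Definition convex_interior_sigma (eps del : R) (Th : omb) (w : vec3) : Prop :=
  exists v, v <> (0, 0, 0) /\ convex_interior Th v /\ w = Sigma eps del v.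

Definition f_R (eps del : R) : R := exp (- del) * cosh eps - sinh eps - 1.

Definition region_R (eps del : R) : Prop :=
  f_R eps del >= 0 /\ f_R eps (- del) >= 0.

(* In the Θ-basis Σ acts only on (y, z), by [[A, -S], [-S, B]] with
   A = e^{-δ} cosh ε, B = e^{δ} cosh ε, S = sinh ε, so that AB = 1 + S².
   The convex interior is the cone {yz > 0, |x| < |y + z|}, so Σ maps it into
   itself iff Σ sends the open quadrant y, z > 0 into an open quadrant without
   ever decreasing |y + z| there.  The point (y, z) = (B, S) shows S ≤ 0 is
   necessary; given S ≤ 0 the quadrant is preserved and y' + z' - (y + z) is
   the linear form (A - S - 1) y + (B - S - 1) z, nonnegative on the quadrant
   iff f(ε, δ) = A - S - 1 ≥ 0 and f(ε, -δ) = B - S - 1 ≥ 0.  Conversely these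
   two inequalities and AB = 1 + S² already force S ≤ 0. *)
From Stdlib Require Import Reals Lra Psatz.
Open Scope R_scope.

Lemma cosh_pos (x : R) : 0 < cosh x.
Proof. unfold cosh; pose proof (exp_pos x); pose proof (exp_pos (- x)); lra. Qed.

Lemma exp_mul_exp_opp (x : R) : exp x * exp (- x) = 1.
Proof. now rewrite <- exp_plus, Rplus_opp_r, exp_0. Qed.

Lemma cosh_sqr (x : R) : cosh x * cosh x = 1 + sinh x * sinh x.
Proof.
  unfold cosh, sinh; pose proof (exp_mul_exp_opp x); nra.
Qed.

Lemma Rabs_sub_lt_Rabs_add (y z : R) : Rabs (y - z) < Rabs (y + z) <-> 0 < y * z.
Proof. split; intro H; split_Rabs; nra. Qed.

Lemma Rmult_pos_cases (y z : R) :
  0 < y * z -> (0 < y /\ 0 < z) \/ (y < 0 /\ z < 0).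
Proof.
  intro H; destruct (Rtotal_order y 0) as [Hy | [-> | Hy]].
  - right; split; nra.
  - rewrite Rmult_0_l in H; lra.
  - left; split; nra.
Qed.

Lemma linear_form_nonneg_quadrant (a b : R) :
  (forall y z, 0 < y -> 0 < z -> 0 <= a * y + b * z) -> 0 <= a /\ 0 <= b.
Proof.
  intro H.
  pose proof (Rle_abs a); pose proof (Rle_abs b).
  pose proof (Rabs_pos a); pose proof (Rabs_pos b).
  split; apply Rnot_lt_le; intro Hneg.
  - specialize (H (Rabs b + 1) (- a / 2)).
    assert (E : a * (Rabs b + 1) + b * (- a / 2) = a * (Rabs b + 1 - b / 2))
      by field.
    rewrite E in H; nra.
  - specialize (H (- b / 2) (Rabs a + 1)).
    assert (E : a * (- b / 2) + b * (Rabs a + 1) = b * (Rabs a + 1 - a / 2))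
      by field.
    rewrite E in H; nra.
Qed.

(* The Θ-basis puts p, q, r, s at fixed coordinates, so the convex interior
   does not depend on ζ_t, ζ_b. *)
Definition interior_cone (v : vec3) : Prop :=
  let '(x, y, z) := v in 0 < y * z /\ Rabs x < Rabs (y + z).

Lemma convex_interior_cone (Th : omb) (v : vec3) :
  convex_interior Th v <-> interior_cone v.
Proof.
  destruct v as [[x y] z]; simpl.
  rewrite Rabs_sub_lt_Rabs_add.
  split; [tauto|]; intros [Hyz Hx]; repeat split; [|assumption..].
  intro E; apply Rlt_not_le with (1 := Hyz); replace z with (- y) by lra; nra.
Qed.

Definition Sigma_gen (a b s : R) (v : vec3) : vec3 :=
  let '(x, y, z) := v in (x, a * y - s * z, - s * y + b * z).

Lemma Sigma_Sigma_gen (eps del : R) (v : vec3) :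
  Sigma eps del v = Sigma_gen (exp (- del) * cosh eps) (exp del * cosh eps) (sinh eps) v.
Proof. now destruct v as [[x y] z]. Qed.

Section ConeInvariance.

Variables a b s : R.
Hypotheses (Ha : 0 < a) (Hb : 0 < b) (Hab : a * b = 1 + s * s).

Lemma s_nonpos_of_expanding : 1 <= a - s -> 1 <= b - s -> s <= 0.
Proof. intros; nra. Qed.

Lemma Sigma_gen_quadrant (y z : R) :
  s <= 0 -> 0 < y -> 0 < z -> 0 < a * y - s * z /\ 0 < - s * y + b * z.
Proof. intros; split; nra. Qed.

Lemma Sigma_gen_cone_of_expanding (v : vec3) :
  1 <= a - s -> 1 <= b - s -> interior_cone v -> interior_cone (Sigma_gen a b s v).
Proof.
  intros HA HB; destruct v as [[x y] z]; simpl; intros [Hyz Hx].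
  assert (Hs := s_nonpos_of_expanding HA HB).
  assert (Hsum : a * y - s * z + (- s * y + b * z) = (a - s) * y + (b - s) * z)
    by ring.
  destruct (Rmult_pos_cases y z Hyz) as [[Hy Hz] | [Hy Hz]].
  - destruct (Sigma_gen_quadrant y z Hs Hy Hz).
    assert (y + z <= (a - s) * y + (b - s) * z) by nra.
    split; [nra|]; rewrite Hsum; split_Rabs; lra.
  - assert (Hy' : 0 < - y) by lra; assert (Hz' : 0 < - z) by lra.
    destruct (Sigma_gen_quadrant (- y) (- z) Hs Hy' Hz').
    assert ((a - s) * y + (b - s) * z <= y + z) by nra.
    split; [nra|]; rewrite Hsum; split_Rabs; lra.
Qed.

Hypothesis Hcone : forall v, interior_cone v -> interior_cone (Sigma_gen a b s v).

Lemma s_nonpos_of_cone : s <= 0.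
Proof.
  apply Rnot_lt_le; intro Hs.
  destruct (Hcone (0, b, s)) as [Hyz _].
  - simpl; rewrite Rabs_R0; split; [nra|apply Rabs_pos_lt; lra].
  - replace (- s * b + b * s) with 0 in Hyz by ring; lra.
Qed.

(* Otherwise the point (y' + z', y, z) would lie in the cone while its image
   (y' + z', y', z') would not. *)
Lemma Sigma_gen_expanding_of_cone (y z : R) :
  0 < y -> 0 < z -> y + z <= (a - s) * y + (b - s) * z.
Proof.
  intros Hy Hz.
  destruct (Sigma_gen_quadrant y z s_nonpos_of_cone Hy Hz) as [Hy' Hz'].
  assert (Hw : a * y - s * z + (- s * y + b * z) = (a - s) * y + (b - s) * z)
    by ring.
  set (w := (a - s) * y + (b - s) * z) in Hw.
  apply Rnot_lt_le; intro Hlt.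
  destruct (Hcone (w, y, z)) as [_ Hx].
  - split; [nra|]; rewrite !Rabs_right; lra.
  - simpl in Hx; rewrite Hw in Hx; lra.
Qed.

Lemma expanding_of_cone : 1 <= a - s /\ 1 <= b - s.
Proof.
  destruct (linear_form_nonneg_quadrant (a - s - 1) (b - s - 1)).
  - intros y z Hy Hz; pose proof (Sigma_gen_expanding_of_cone y z Hy Hz); lra.
  - lra.
Qed.

End ConeInvariance.

Lemma Sigma_gen_cone_iff (a b s : R) :
  0 < a -> 0 < b -> a * b = 1 + s * s ->
  (forall v, interior_cone v -> interior_cone (Sigma_gen a b s v))
  <-> 1 <= a - s /\ 1 <= b - s.
Proof.
  intros Ha Hb Hab; split.
  - apply expanding_of_cone; assumption.
  - intros [HA HB] v; apply Sigma_gen_cone_of_expanding; assumption.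
Qed.

Lemma convex_interior_sigma_cone (Th : omb) (eps del : R) :
  (forall w, convex_interior_sigma eps del Th w -> convex_interior Th w)
  <-> (forall v, interior_cone v ->
        interior_cone (Sigma_gen (exp (- del) * cosh eps) (exp del * cosh eps)
                         (sinh eps) v)).
Proof.
  split.
  - intros H v Hv; rewrite <- Sigma_Sigma_gen, <- (convex_interior_cone Th).
    apply H; exists v; rewrite convex_interior_cone; repeat split; auto.
    destruct v as [[x y] z]; intro E; injection E; intros -> -> _.
    destruct Hv as [Hyz _]; lra.
  - intros H w (v & _ & Hv & ->).
    rewrite convex_interior_cone, Sigma_Sigma_gen in *; auto.
Qed.

Lemma region_R_iff (eps del : R) :
  region_R eps del <->
  1 <= exp (- del) * cosh eps - sinh eps /\ 1 <= exp del * cosh eps - sinh eps.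
Proof. unfold region_R, f_R; rewrite Ropp_involutive; lra. Qed.

Theorem proposition7p4 (Th : omb) (eps del : R) :
  omb_convex Th ->
  ((forall w : vec3, convex_interior_sigma eps del Th w -> convex_interior Th w)
   <-> region_R eps del).
Proof.
  intros _.
  rewrite convex_interior_sigma_cone, region_R_iff.
  apply Sigma_gen_cone_iff.
  - apply Rmult_lt_0_compat; [apply exp_pos|apply cosh_pos].
  - apply Rmult_lt_0_compat; [apply exp_pos|apply cosh_pos].
  - rewrite <- cosh_sqr.
    pose proof (exp_mul_exp_opp del); nra.
Qed.
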